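(* Let the premiums $\{X_n, n\geq 1\}$ and the claims $\{Y_n, n\geq 1\}$ be sequences of nonnegative, identically distributed, independent random variables with finite expectations, and suppose the sequences $\{X_n\}$ and $\{Y_n\}$ are mutually independent. Let $r>0$ be a constant and set $I_n=r$ for all $n\geq 1$. For $u\geq 0$ define $U_0=u$, $U_n=(U_{n-1}+X_n)(1+r)-Y_n$ for $n\geq 1$, and $\Psi(u)=\mathbb{P}\big(\bigcup_{n=1}^\infty\{U_n<0\}\big)$. If there exists a positive real number $R$ satisfying $$\mathbb{E}\Big(e^{R\left(Y_1(1+r)^{-1}-X_1\right)}\Big)\leq 1,$$ then $\Psi(u)\leq e^{-Ru}$ for all $u>0$. *)

From HB Require Import structures.
From mathcomp Require Import all_boot all_order all_algebra.
From mathcomp Require Import finmap.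
From mathcomp Require Import all_classical all_reals all_analysis.
Set Implicit Arguments. Unset Strict Implicit. Unset Printing Implicit Defensive.
Import Order.TTheory GRing.Theory Num.Theory.
Local Open Scope classical_set_scope.
Local Open Scope ring_scope.

Definition mutually_independent d (T : measurableType d) (R : realType)
    (P : probability T R) (I : choiceType) (X : I -> T -> R) : Prop :=
  forall (J : {fset I}) (B : I -> set R),
    (forall i, i \in J -> measurable (B i)) ->
    P (\bigcap_(i in [set` J]) (X i @^-1` B i)) =
    (\prod_(i <- J) P (X i @^-1` B i))%E.

Definition identically_distributed d (T : measurableType d) (R : realType)
    (P : probability T R) (X : nat -> T -> R) : Prop :=
  forall n (B : set R), measurable B -> P (X n @^-1` B) = P (X 0%N @^-1` B).

(* Surplus process with constant interest r: U_0 = u,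
   U_{n+1} = (U_n + X_{n+1})(1+r) - Y_{n+1}; here X k, Y k stand for
   X_{k+1}, Y_{k+1} of the paper. *)
Fixpoint surplus (R : realType) (T : Type) (u r : R) (X Y : nat -> T -> R)
    (n : nat) (w : T) : R :=
  match n with
  | 0%N => u
  | k.+1 => (surplus u r X Y k w + X k w) * (1 + r) - Y k w
  end.

Definition premiums_claims (T : Type) (R : Type) (X Y : nat -> T -> R)
    (i : nat + nat) : T -> R :=
  match i with inl n => X n | inr n => Y n end.

Definition ruin_prob d (T : measurableType d) (R : realType)
    (P : probability T R) (u r : R) (X Y : nat -> T -> R) : \bar R :=
  P (\bigcup_(k in [set: nat]) [set w | surplus u r X Y k.+1 w < 0]).

(* Discounting to time 0 gives U_n = (1+r)^n (u - S_n), where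
   S_n = \sum_(k < n) Z_k / (1+r)^k and Z_k = Y_k / (1+r) - X_k; so ruin by
   time N means that max(S_0, ..., S_N) exceeds u.  Let h_N be exp(Rc S_N) as
   long as S has stayed below u, and exp(Rc u) afterwards.  The factor
   exp(Rc Z_N / (1+r)^N) by which h moves while S stays below u is independent
   of the past and has mean at most 1, by convexity of exp (as (1+r)^-N <= 1)
   and the hypothesis on Rc; hence E h_N <= E h_0 = 1.  Since h_N = exp(Rc u)
   on the event of ruin by time N, that event has probability at most
   exp(-Rc u), and continuity from below gives the bound on Psi(u). *)

From HB Require Import structures.
From mathcomp Require Import all_boot all_order all_algebra.
From mathcomp Require Import finmap.
From mathcomp Require Import all_classical all_reals all_analysis.
From mathcomp Require Import measurable_realfun.
From mathcomp Require Import ring.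
Import Order.TTheory GRing.Theory Num.Theory.
Local Open Scope classical_set_scope.
Local Open Scope ring_scope.
Set Implicit Arguments. Unset Strict Implicit. Unset Printing Implicit Defensive.

Lemma measurable_fun_g_sigma d (T : measurableType d) (G : set (set T)) :
  G `<=` measurable -> measurable_fun setT (fun x : T => x : g_sigma_algebraType G).
Proof.
move=> Gm _ A mA; rewrite setTI.
by apply: smallest_sub A mA => //; exact: sigma_algebra_measurable.
Qed.

Lemma g_sigma_measurable_fun d d' (T : measurableType d) (T' : measurableType d')
    (G : set (set T)) (f : T -> T') : G `<=` measurable ->
  measurable_fun [set: g_sigma_algebraType G] (f : g_sigma_algebraType G -> T') ->
  measurable_fun setT f.
Proof. by move=> Gm mf; exact: measurableT_comp mf (measurable_fun_g_sigma Gm). Qed.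

(* The library's measurable_prod_g_measurableType asks C1 and C2 to contain
   every set; containing setT is enough. *)
Lemma measurable_prod_g_sigma (T1 T2 : pointedType)
    (C1 : set (set T1)) (C2 : set (set T2)) : C1 setT -> C2 setT ->
  @measurable _ (g_sigma_algebraType C1 * g_sigma_algebraType C2)%type =
  <<s [set A `*` B | A in C1 & B in C2] >>.
Proof.
move=> C1T C2T; rewrite measurable_prod_measurableType; apply/seteqP; split.
- apply: smallest_sub; first exact: smallest_sigma_algebra.
  move=> _ [A mA] [B mB] <-.
  have -> : A `*` B = fst @^-1` A `&` snd @^-1` B :> set (_ * _).
    by rewrite -setXT -setTX -setXI setIT setTI.
  apply: (@measurableI _ (g_sigma_algebraType _)).
  + have : preimage_set_system [set: g_sigma_algebraType C1 * g_sigma_algebraType C2]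
      fst <<s C1 >> (fst @^-1` A).
      by exists A; rewrite ?setTI.
    rewrite -g_sigma_preimageE; apply: sub_sigma_algebra2 => _ [A' C1A' <-].
    by exists A' => //; exists setT => //; rewrite setTI setXT.
  + have : preimage_set_system [set: g_sigma_algebraType C1 * g_sigma_algebraType C2]
      snd <<s C2 >> (snd @^-1` B).
      by exists B; rewrite ?setTI.
    rewrite -g_sigma_preimageE; apply: sub_sigma_algebra2 => _ [B' C2B' <-].
    by exists setT => //; exists B' => //; rewrite setTI setTX.
- apply: smallest_sub; first exact: smallest_sigma_algebra.
  move=> _ [A C1A] [B C2B] <-; apply: sub_sigma_algebra.
  by exists A; [exact: sub_sigma_algebra|exists B => //; exact: sub_sigma_algebra].
Qed.

Section independent_pi_systems.
Context d (T : measurableType d) (R : realType) (P : probability T R).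
Variables C D : set (set T).
Hypotheses (CT : C setT) (DT : D setT) (Cm : C `<=` measurable) (Dm : D `<=` measurable)
  (CI : setI_closed C) (DI : setI_closed D)
  (CD : forall A B, C A -> D B -> P (A `&` B) = (P A * P B)%E).

Local Notation TC := (g_sigma_algebraType C).
Local Notation TD := (g_sigma_algebraType D).

Let mC := measurable_fun_g_sigma Cm.
Let mD := measurable_fun_g_sigma Dm.
Let PC := distribution P (mfun_Sub (mem_set mC)).
Let PD := distribution P (mfun_Sub (mem_set mD)).
Let diag := fun x : T => ((x : TC), (x : TD)).
Let mdiag : measurable_fun setT diag := measurable_fun_pair mC mD.
Let Pdiag := distribution P (mfun_Sub (mem_set mdiag)).

Let Pdiag_prod (A : set (TC * TD)) : measurable A ->
  Pdiag A = (PC \x PD)%E A.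
Proof.
apply: (measure_unique [set (A : set TC) `*` (B : set TD) | A in C & B in D]
  (fun=> setT)) => //.
- exact: measurable_prod_g_sigma.
- move=> _ _ [A1 CA1] [B1 DB1] <- [A2 CA2] [B2 DB2] <-; rewrite -setXI.
  by exists (A1 `&` A2); [exact: CI|exists (B1 `&` B2); [exact: DI|]].
- by move=> _; exists setT => //; exists setT => //; rewrite setXTT.
- by rewrite bigcup_const.
- move=> _ [A1 CA1] [B1 DB1] <-.
  transitivity (PC A1 * PD B1)%E; first exact: CD.
  by apply/esym/product_measure1E; exact: sub_sigma_algebra.
- by move=> _; rewrite (le_lt_trans (probability_le1 _ measurableT)) ?ltry.
Qed.

Lemma independent_ge0_integralM (W : TC -> R) (G : TD -> R) :
  measurable_fun setT W -> measurable_fun setT G ->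
  (forall x, 0 <= W x) -> (forall x, 0 <= G x) ->
  (\int[P]_x (W x * G x)%:E = \int[P]_x (W x)%:E * \int[P]_x (G x)%:E)%E.
Proof.
move=> mW mG W0 G0.
have mWG : measurable_fun setT (fun p : TC * TD => (W p.1 * G p.2)%:E).
  by apply/measurable_EFinP; apply: measurable_funM; apply: measurableT_comp.
transitivity (\int[Pdiag]_p (W p.1 * G p.2)%:E)%E.
  by rewrite ge0_integral_distribution // => ?; rewrite lee_fin mulr_ge0.
rewrite (eq_measure_integral (PC \x PD)%E); last by move=> A mA _; exact: Pdiag_prod.
rewrite fubini_tonelli1 //; last by move=> ?; rewrite lee_fin mulr_ge0.
have mWE : measurable_fun setT (fun x => (W x)%:E) by exact/measurable_EFinP.
have mGE : measurable_fun setT (fun y => (G y)%:E) by exact/measurable_EFinP.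
have intW : (\int[PC]_x (W x)%:E = \int[P]_x (W x)%:E)%E.
  by rewrite ge0_integral_distribution.
have intG : (\int[PD]_y (G y)%:E = \int[P]_x (G x)%:E)%E.
  by rewrite ge0_integral_distribution.
transitivity (\int[PC]_x ((W x)%:E * \int[PD]_y (G y)%:E))%E.
  apply: eq_integral => x _; rewrite -ge0_integralZl_EFin //.
  by move=> y _; rewrite lee_fin.
rewrite (ge0_integralZr _ measurableT mWE) ?intW ?intG //.
- by move=> x _; rewrite lee_fin.
- by apply: integral_ge0 => y _; rewrite lee_fin.
Qed.

End independent_pi_systems.

Section cylinders.
Context d (T : measurableType d) (R : realType) (P : probability T R)
  (I : choiceType) (Z : I -> T -> R).
Hypothesis mZ : forall i, measurable_fun setT (Z i).

Definition cylinder (J : {fset I}) (B : I -> set R) : set T :=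
  \bigcap_(i in [set` J]) (Z i @^-1` B i).

(* g_sigma_algebraType (cylinders p) is T with the sigma-algebra generated by
   the Z i, i in p. *)
Definition cylinders (p : set I) : set (set T) :=
  [set cylinder J B | J in [set J : {fset I} | [set` J] `<=` p]
                    & B in [set B : I -> set R | forall i, measurable (B i)]].

Let widen (J : {fset I}) (B : I -> set R) i := if i \in J then B i else setT.

Let measurable_widen J B : (forall i, measurable (B i)) ->
  forall i, measurable (widen J B i).
Proof. by move=> mB i; rewrite /widen; case: ifP. Qed.

Let cylinder_widen J K B : {subset J <= K} -> cylinder K (widen J B) = cylinder J B.
Proof.
move=> JK; apply/seteqP; split => w cw i /= iJ.
- by have := cw i (JK _ iJ); rewrite /widen iJ.
- by rewrite /widen; case: ifP => // /(cw i).
Qed.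

Let cylinderI J J' B B' : cylinder J B `&` cylinder J' B' =
  cylinder (J `|` J')%fset (fun i => widen J B i `&` widen J' B' i).
Proof.
rewrite -(cylinder_widen B (fsubsetP (fsubsetUl J J'))).
rewrite -(cylinder_widen B' (fsubsetP (fsubsetUr J J'))).
apply/seteqP; split => w.
- by move=> [cw cw'] i iK; split; [exact: cw|exact: cw'].
- by move=> cw; split => i iK; have [] := cw i iK.
Qed.

Lemma cylindersT p : cylinders p setT.
Proof.
exists fset0; first by move=> i /=; rewrite inE.
by exists (fun=> setT) => //; rewrite /cylinder set_fset0 bigcap_set0.
Qed.

Lemma cylinders_measurable p : cylinders p `<=` measurable.
Proof.
move=> _ [J _ [B mB <-]]; apply: fin_bigcap_measurable => // i _.
by rewrite -[_ @^-1` _]setTI; exact: mZ.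
Qed.

Lemma cylinders_setI_closed p : setI_closed (cylinders p).
Proof.
move=> _ _ [J Jp [B mB <-]] [J' J'p [B' mB' <-]]; rewrite cylinderI.
exists (J `|` J')%fset; first by move=> i /=; rewrite inE => /orP[/Jp|/J'p].
exists (fun i => widen J B i `&` widen J' B' i) => // i.
by apply: measurableI; exact: measurable_widen.
Qed.

Lemma measurable_fun_cylinders p i : p i ->
  measurable_fun [set: g_sigma_algebraType (cylinders p)]
    (Z i : g_sigma_algebraType (cylinders p) -> R).
Proof.
move=> pi _ B mB; rewrite setTI; apply: sub_sigma_algebra.
exists [fset i]%fset; first by move=> j /=; rewrite inE => /eqP ->.
by exists (fun=> B) => //; rewrite /cylinder set_fset1 bigcap_set1.
Qed.

Hypothesis indep : mutually_independent P Z.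

Lemma cylinders_independent p q : p `&` q = set0 ->
  forall A A', cylinders p A -> cylinders q A' -> P (A `&` A') = (P A * P A')%E.
Proof.
move=> pq _ _ [J Jp [B mB <-]] [J' J'q [B' mB' <-]].
rewrite cylinderI indep; last by move=> i _; apply: measurableI; exact: measurable_widen.
rewrite -(cylinder_widen B (fsubsetP (fsubsetUl J J'))).
rewrite -(cylinder_widen B' (fsubsetP (fsubsetUr J J'))).
rewrite !indep; try by move=> i _; exact: measurable_widen.
(* p and q are disjoint, so at each index one of the two factors is P setT. *)
rewrite -big_split; apply: eq_bigr => i _ /=; rewrite /widen.
case: (boolP (i \in J)) => iJ.
- have iJ' : i \notin J'.
    apply/negP => iJ'.
    have : (p `&` q) i by split; [exact: Jp|exact: J'q].
    by rewrite pq.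
  by rewrite (negbTE iJ') setIT preimage_setT probability_setT mule1.
- by rewrite setTI preimage_setT probability_setT mul1e.
Qed.

Lemma cylinders_ge0_integralM p q : p `&` q = set0 ->
  forall (W : g_sigma_algebraType (cylinders p) -> R)
         (G : g_sigma_algebraType (cylinders q) -> R),
  measurable_fun setT W -> measurable_fun setT G ->
  (forall x, 0 <= W x) -> (forall x, 0 <= G x) ->
  (\int[P]_x (W x * G x)%:E = \int[P]_x (W x)%:E * \int[P]_x (G x)%:E)%E.
Proof.
move=> pq; apply: independent_ge0_integralM; try exact: cylindersT;
  try exact: cylinders_measurable; try exact: cylinders_setI_closed.
exact: cylinders_independent.
Qed.

End cylinders.

Section discounted_loss.
Context (T : Type) (R : realType) (r : R) (X Y : nat -> T -> R).

Definition net_loss n w := Y n w / (1 + r) - X n w.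

Definition discounted_loss n w := \sum_(k < n) net_loss k w / (1 + r) ^+ k.

Lemma discounted_loss0 w : discounted_loss 0 w = 0.
Proof. by rewrite /discounted_loss big_ord0. Qed.

Lemma discounted_lossS n w :
  discounted_loss n.+1 w = discounted_loss n w + net_loss n w / (1 + r) ^+ n.
Proof. by rewrite /discounted_loss big_ord_recr. Qed.

Lemma surplusE u n w : 1 + r != 0 ->
  surplus u r X Y n w = (1 + r) ^+ n * (u - discounted_loss n w).
Proof.
move=> r1; elim: n => [|n IH] /=; first by rewrite discounted_loss0 subr0 mul1r.
have rn : (1 + r) ^+ n != 0 by rewrite expf_neq0.
by rewrite IH discounted_lossS /net_loss exprS; field; rewrite ?rn ?r1.
Qed.

End discounted_loss.

Fixpoint running_max (R : realDomainType) (s : nat -> R) n :=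
  if n is k.+1 then Num.max (running_max s k) (s n) else s 0%N.

Section running_max.
Context (R : realDomainType) (s : nat -> R).

Lemma running_max_le_succ n : running_max s n <= running_max s n.+1.
Proof. by rewrite /= le_max lexx. Qed.

Lemma le_running_max n k : (k <= n)%N -> s k <= running_max s n.
Proof.
elim: n => [|n IH]; first by rewrite leqn0 => /eqP ->.
rewrite leq_eqVlt => /orP[/eqP ->|/IH kn]; first by rewrite /= le_max lexx orbT.
exact: le_trans kn (running_max_le_succ n).
Qed.

Lemma lt_running_max x n : x < running_max s n -> exists2 k, (k <= n)%N & x < s k.
Proof.
elim: n => [|n IH] /=; first by exists 0%N.
rewrite lt_max => /orP[/IH [k kn xk]|xn]; last by exists n.+1.
by exists k => //; exact: leqW.
Qed.

End running_max.

Lemma ruin_eventE (T : Type) (R : realType) (u r : R) (X Y : nat -> T -> R) :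
  0 < u -> 0 < 1 + r ->
  \bigcup_(k in [set: nat]) [set w | surplus u r X Y k.+1 w < 0] =
  \bigcup_N [set w | u < running_max (discounted_loss r X Y ^~ w) N].
Proof.
move=> u_gt0 r1_gt0.
have ruinE k w : (surplus u r X Y k w < 0) = (u < discounted_loss r X Y k w).
  by rewrite surplusE ?gt_eqF // pmulr_rlt0 ?exprn_gt0 // subr_lt0.
apply/seteqP; split => w [k _] ruin.
- have {ruin} : surplus u r X Y k.+1 w < 0 := ruin; rewrite ruinE => ruin.
  by exists k.+1 => //; exact: lt_le_trans ruin (le_running_max _ (leqnn _)).
- case: (lt_running_max ruin) => -[|n] _.
    by rewrite discounted_loss0 => /(lt_trans u_gt0); rewrite ltxx.
  by rewrite -ruinE => ?; exists n.
Qed.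

Section measurable_discounted_loss.
Context d (T : measurableType d) (R : realType) (r : R) (X Y : nat -> T -> R).

Lemma measurable_net_loss n : measurable_fun setT (X n) -> measurable_fun setT (Y n) ->
  measurable_fun setT (net_loss r X Y n).
Proof.
move=> mXn mYn; apply: measurable_funB => //.
by apply: measurable_funM => //; exact: measurable_cst.
Qed.

Variable N : nat.
Hypotheses (mX : forall k, (k < N)%N -> measurable_fun setT (X k))
  (mY : forall k, (k < N)%N -> measurable_fun setT (Y k)).

Lemma measurable_discounted_loss n : (n <= N)%N ->
  measurable_fun setT (discounted_loss r X Y n).
Proof.
move=> nN; apply: measurable_sum => k.
have kN : (k < N)%N := leq_trans (ltn_ord k) nN.
apply: measurable_funM; last exact: measurable_cst.
by apply: measurable_net_loss; [exact: mX|exact: mY].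
Qed.

Lemma measurable_running_max_loss :
  measurable_fun setT (fun w => running_max (discounted_loss r X Y ^~ w) N).
Proof.
suff: forall n, (n <= N)%N ->
    measurable_fun setT (fun w => running_max (discounted_loss r X Y ^~ w) n) by apply.
elim=> [|n IH] nN /=; first exact: measurable_discounted_loss.
apply: measurable_maxr; first by apply: IH; exact: ltnW.
exact: measurable_discounted_loss.
Qed.

End measurable_discounted_loss.

Lemma expR_scale_le (R : realType) (a t : R) : 0 <= a <= 1 ->
  expR (a * t) <= 1 - a + a * expR t.
Proof.
case/andP => a0 a1; have := convex_expR (Itv01 a0 a1) t 0.
by rewrite !convRE /= mulr0 addr0 expR0 mulr1 addrC.
Qed.

Lemma integral_expR_scale_le1 d (T : measurableType d) (R : realType)
    (P : probability T R) (f : T -> R) (a : R) :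
  measurable_fun setT f -> 0 <= a <= 1 ->
  (\int[P]_w (expR (f w))%:E <= 1)%E -> (\int[P]_w (expR (a * f w))%:E <= 1)%E.
Proof.
move=> mf /andP[a0 a1] Ef.
have mexpf : measurable_fun setT (fun w => (expR (f w))%:E).
  by apply/measurable_EFinP; exact: measurableT_comp.
apply: (@le_trans _ _ (\int[P]_w ((1 - a)%:E + a%:E * (expR (f w))%:E))%E).
  apply: ge0_le_integral => //.
  - apply/measurable_EFinP; apply: measurableT_comp => //.
    by apply: measurable_funM => //; exact: measurable_cst.
  - apply: emeasurable_funD; first exact: measurable_cst.
    by apply: emeasurable_funM => //; exact: measurable_cst.
  - by move=> w _; rewrite -EFinM -EFinD lee_fin expR_scale_le ?a0.
rewrite ge0_integralD //; last 3 first.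
- by move=> w _; rewrite lee_fin subr_ge0.
- by move=> w _; rewrite mule_ge0 // lee_fin expR_ge0.
- by apply: emeasurable_funM => //; exact: measurable_cst.
rewrite integral_cst // [X in (_ * X)%E]probability_setT mule1 ge0_integralZl //.
apply: (@le_trans _ _ ((1 - a)%:E + a%:E * 1)%E).
  by rewrite leeD2l // lee_wpmul2l // lee_fin.
by rewrite mule1 -EFinD subrK.
Qed.

Lemma identically_distributed_ge0_integral d (T : measurableType d) (R : realType)
    (P : probability T R) (V : nat -> T -> R) (f : R -> R) :
  (forall n, measurable_fun setT (V n)) -> identically_distributed P V ->
  measurable_fun setT f -> (forall x, 0 <= f x) ->
  forall n, (\int[P]_w (f (V n w))%:E = \int[P]_w (f (V 0%N w))%:E)%E.
Proof.
move=> mV idV mf f0 n.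
have mfE : measurable_fun setT (fun x => (f x)%:E) by exact/measurable_EFinP.
have f0E : {in setT, forall x, (0 <= (f x)%:E)%E} by move=> x _; rewrite lee_fin.
have := ge0_integral_pushforward (mV n) P measurableT mfE f0E.
have := ge0_integral_pushforward (mV 0%N) P measurableT mfE f0E.
rewrite !preimage_setT => <- <-.
by apply: eq_measure_integral => A mA _; exact: idV.
Qed.

Definition time (i : nat + nat) : nat := match i with inl n | inr n => n end.

Section lundberg_bound.
Context d (T : measurableType d) (R : realType) (P : probability T R)
  (X Y : nat -> T -> R) (r Rc u : R).
Hypotheses (mX : forall n, measurable_fun setT (X n))
  (mY : forall n, measurable_fun setT (Y n))
  (idX : identically_distributed P X) (idY : identically_distributed P Y)
  (indep : mutually_independent P (premiums_claims X Y))
  (r_gt0 : 0 < r) (Rc_gt0 : 0 < Rc) (u_gt0 : 0 < u)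
  (adjustment : (\int[P]_w (expR (Rc * (Y 0%N w / (1 + r) - X 0%N w)))%:E <= 1)%E).

Local Notation Z := (premiums_claims X Y).
Local Notation S := (discounted_loss r X Y).
Local Notation M N w := (running_max (S ^~ w) N).
Local Notation Past N := (g_sigma_algebraType (cylinders Z [set i | (time i < N)%N])).
Local Notation Present N := (g_sigma_algebraType (cylinders Z [set i | time i = N])).

Let mZ i : measurable_fun setT (Z i). Proof. by case: i. Qed.

Let measurable_expR_scale d' (T' : measurableType d') (f : T' -> R) (a : R) :
  measurable_fun setT f -> measurable_fun setT (fun w => expR (a * f w)).
Proof.
by move=> mf; apply: measurableT_comp => //; apply: measurable_funM => //; exact: measurable_cst.
Qed.

Let measurable_divr d' (T' : measurableType d') (f : T' -> R) (b : R) :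
  measurable_fun setT f -> measurable_fun setT (fun w => f w / b).
Proof. by move=> mf; apply: measurable_funM => //; exact: measurable_cst. Qed.

Lemma expR_net_loss_le1 n : (\int[P]_w (expR (Rc * net_loss r X Y n w))%:E <= 1)%E.
Proof.
(* Only the laws of X n and Y n separately are those of X 0 and Y 0, hence the
   detour through the independence of X n and Y n. *)
have split m : (\int[P]_w (expR (Rc * net_loss r X Y m w))%:E =
    \int[P]_w (expR (Rc * (Y m w / (1 + r))))%:E *
    \int[P]_w (expR (- Rc * X m w))%:E)%E.
  rewrite -(cylinders_ge0_integralM mZ indep (p := [set inr m]) (q := [set inl m])).
  - by apply: eq_integral => w _; rewrite /net_loss mulrBr mulNr expRD.
  - by apply/seteqP; split => // i [->].
  - apply/measurable_expR_scale/measurable_divr.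
    exact: (measurable_fun_cylinders (i := inr m)).
  - apply: measurable_expR_scale.
    exact: (measurable_fun_cylinders (i := inl m)).
  - by move=> w; exact: expR_ge0.
  - by move=> w; exact: expR_ge0.
rewrite split.
rewrite (identically_distributed_ge0_integral (f := fun y => expR (Rc * (y / (1 + r)))) mY idY);
  [|exact/measurable_expR_scale/measurable_divr|by move=> ?; exact: expR_ge0].
rewrite (identically_distributed_ge0_integral (f := fun x => expR (- Rc * x)) mX idX);
  [|exact: measurable_expR_scale|by move=> ?; exact: expR_ge0].
by rewrite -split.
Qed.

Let mX_past N k : (k < N)%N -> measurable_fun [set: Past N] (X k : Past N -> R).
Proof. exact: (measurable_fun_cylinders (i := inl k)). Qed.

Let mY_past N k : (k < N)%N -> measurable_fun [set: Past N] (Y k : Past N -> R).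
Proof. exact: (measurable_fun_cylinders (i := inr k)). Qed.

Let mS_past N : measurable_fun [set: Past N] (S N : Past N -> R).
Proof. exact: measurable_discounted_loss (mX_past (N := N)) (mY_past (N := N)) _ _. Qed.

Let mM_past N : measurable_fun [set: Past N] (fun w : Past N => M N w).
Proof. exact: measurable_running_max_loss (mX_past (N := N)) (mY_past (N := N)). Qed.

Let lift_past N (f : Past N -> R) : measurable_fun setT f -> measurable_fun setT (f : T -> R).
Proof. exact/g_sigma_measurable_fun/cylinders_measurable. Qed.

(* h_N of the proof idea: [M N w <= u] says that S has stayed below u up to N. *)
Let stopped N w := if M N w <= u then expR (Rc * S N w) else expR (Rc * u).
Let stopped_alive N w := if M N w <= u then expR (Rc * S N w) else 0.
Let stopped_ruined N w := if M N w <= u then 0 else expR (Rc * u).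
Let increment N w := expR (((1 + r) ^+ N)^-1 * (Rc * net_loss r X Y N w)).

Let stopped_split N w : stopped N w = stopped_alive N w + stopped_ruined N w.
Proof. by rewrite /stopped /stopped_alive /stopped_ruined; case: ifP; rewrite ?addr0 ?add0r. Qed.

Let stopped_succ_le N w : stopped N.+1 w <= stopped_alive N w * increment N w + stopped_ruined N w.
Proof.
have expR_S : expR (Rc * S N.+1 w) = expR (Rc * S N w) * increment N w.
  by rewrite -expRD discounted_lossS /increment; congr expR; ring.
rewrite /stopped /stopped_alive /stopped_ruined /=; rewrite ge_max.
case: (lerP (M N w) u) => /= hM; last by rewrite mul0r add0r.
rewrite addr0 -expR_S; case: (lerP (S N.+1 w) u) => // /ltW uS.
by rewrite ler_expR ler_pM2l.
Qed.

Let stopped_ge0 N w : 0 <= stopped N w.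
Proof. by rewrite /stopped; case: ifP => _; exact: expR_ge0. Qed.

Let mstopped N : measurable_fun setT (stopped N).
Proof.
apply: (lift_past (N := N)); apply: measurable_fun_ifT; try exact: measurable_cst.
- by apply: measurable_fun_ler; [exact: mM_past|exact: measurable_cst].
- by apply: measurable_expR_scale; exact: mS_past.
Qed.

Let mstopped_alive N : measurable_fun [set: Past N] (stopped_alive N : Past N -> R).
Proof.
apply: measurable_fun_ifT; last exact: measurable_cst.
- by apply: measurable_fun_ler; [exact: mM_past|exact: measurable_cst].
- by apply: measurable_expR_scale; exact: mS_past.
Qed.

Let mstopped_ruined N : measurable_fun [set: Past N] (stopped_ruined N : Past N -> R).
Proof.
apply: measurable_fun_ifT; try exact: measurable_cst.
by apply: measurable_fun_ler; [exact: mM_past|exact: measurable_cst].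
Qed.

Let mincrement N : measurable_fun [set: Present N] (increment N : Present N -> R).
Proof.
apply/measurable_expR_scale/measurable_funM; first exact: measurable_cst.
by apply: measurable_net_loss;
  [apply: (measurable_fun_cylinders (i := inl N))|apply: (measurable_fun_cylinders (i := inr N))].
Qed.

Let increment_le1 N : (\int[P]_w (increment N w)%:E <= 1)%E.
Proof.
have q_ge1 : 1 <= (1 + r) ^+ N by rewrite exprn_ege1 // lerDl ltW.
apply: integral_expR_scale_le1 (expR_net_loss_le1 N).
  apply: measurable_funM; first exact: measurable_cst.
  exact: measurable_net_loss.
by rewrite invr_ge0 invf_le1 ?(le_trans ler01) ?(lt_le_trans ltr01).
Qed.

Lemma integral_stopped_succ_le N :
  (\int[P]_w (stopped N.+1 w)%:E <= \int[P]_w (stopped N w)%:E)%E.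
Proof.
have mW := lift_past (mstopped_alive (N := N)); have mV := lift_past (mstopped_ruined (N := N)).
have mG : measurable_fun setT (increment N).
  apply: (g_sigma_measurable_fun _ (mincrement (N := N))); exact: cylinders_measurable.
have W0 w : 0 <= stopped_alive N w by rewrite /stopped_alive; case: ifP => // _; exact: expR_ge0.
have V0 w : 0 <= stopped_ruined N w by rewrite /stopped_ruined; case: ifP => // _; exact: expR_ge0.
have G0 w : 0 <= increment N w by exact: expR_ge0.
apply: (@le_trans _ _ (\int[P]_w ((stopped_alive N w * increment N w)%:E + (stopped_ruined N w)%:E))%E).
  apply: ge0_le_integral => //.
  - by move=> w _; rewrite lee_fin stopped_ge0.
  - by apply/measurable_EFinP; exact: mstopped.
  - by apply: emeasurable_funD; apply/measurable_EFinP => //; exact: measurable_funM.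
  - by move=> w _; rewrite -EFinD lee_fin stopped_succ_le.
rewrite ge0_integralD //; last 4 first.
- by move=> w _; rewrite lee_fin mulr_ge0.
- by apply/measurable_EFinP; exact: measurable_funM.
- by move=> w _; rewrite lee_fin.
- exact/measurable_EFinP.
rewrite (cylinders_ge0_integralM mZ indep _ (mstopped_alive (N := N)) (mincrement (N := N))) //; last first.
  by apply/seteqP; split => // i [/= iN iN']; rewrite iN' ltnn in iN.
under [leRHS]eq_integral do rewrite stopped_split EFinD.
rewrite ge0_integralD //; last 4 first.
- by move=> w _; rewrite lee_fin.
- exact/measurable_EFinP.
- by move=> w _; rewrite lee_fin.
- exact/measurable_EFinP.
rewrite leeD2r // -[leRHS]mule1 lee_wpmul2l ?increment_le1 //.
by apply: integral_ge0 => w _; rewrite lee_fin.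
Qed.

Lemma integral_stopped_le1 N : (\int[P]_w (stopped N w)%:E <= 1)%E.
Proof.
elim: N => [|N IH]; last exact: le_trans (integral_stopped_succ_le N) IH.
under eq_integral do rewrite /stopped /= discounted_loss0 (ltW u_gt0) mulr0 expR0.
by rewrite integral_cst // [X in (_ * X)%E]probability_setT mule1.
Qed.

Lemma measurable_ruin_before N : measurable [set w | u < M N w].
Proof.
rewrite -[X in measurable X]setTI -preimage_itvoy.
exact: (lift_past (mM_past (N := N))) (measurable_itv _).
Qed.

Lemma ruin_before_le N : (P [set w | (u < M N w)%R] <= (expR (- (Rc * u)))%:E)%E.
Proof.
rewrite -[X in (P X <= _)%E]setIT -integral_indic //; last exact: measurable_ruin_before.
apply: (@le_trans _ _ (\int[P]_w (expR (- (Rc * u)) * stopped N w)%:E)%E).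
  apply: ge0_le_integral => //.
  - by apply/measurable_EFinP; exact/measurable_indic/measurable_ruin_before.
  - by apply/measurable_EFinP; apply: measurable_funM => //; exact: measurable_cst.
  move=> w _; rewrite lee_fin indicE; case: (boolP (w \in _)) => [|_]; last first.
    by rewrite mulr_ge0 ?expR_ge0.
  by rewrite inE /= /stopped => /lt_geF ->; rewrite expRN mulVf // gt_eqF // expR_gt0.
under eq_integral do rewrite EFinM.
rewrite ge0_integralZl_EFin ?expR_ge0 //; last 2 first.
- by move=> w _; rewrite lee_fin.
- by apply/measurable_EFinP; exact: mstopped.
by rewrite -[leRHS]mule1 lee_wpmul2l // ?lee_fin ?expR_ge0 // integral_stopped_le1.
Qed.

End lundberg_bound.

Theorem corollary3p3 (d : measure_display) (T : measurableType d)
  (R : realType) (P : probability T R) (X Y : nat -> T -> R) (r Rc : R) :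
  (forall n, measurable_fun setT (X n)) ->
  (forall n, measurable_fun setT (Y n)) ->
  (forall n w, 0 <= X n w) ->
  (forall n w, 0 <= Y n w) ->
  (forall n, P.-integrable setT (EFin \o X n)) ->
  (forall n, P.-integrable setT (EFin \o Y n)) ->
  identically_distributed P X ->
  identically_distributed P Y ->
  mutually_independent P (premiums_claims X Y) ->
  0 < r ->
  0 < Rc ->
  (\int[P]_w (expR (Rc * (Y 0%N w / (1 + r) - X 0%N w)))%:E <= 1)%E ->
  forall u : R, 0 < u -> (ruin_prob P u r X Y <= (expR (- (Rc * u)))%:E)%E.
Proof.
move=> mX mY _ _ _ _ idX idY indep r_gt0 Rc_gt0 adjustment u u_gt0.
rewrite /ruin_prob ruin_eventE //; last by rewrite ltr_wpDr // ltW.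
have mE := measurable_ruin_before r u mX mY.
have ndE : nondecreasing_seq (fun N => [set w | u < running_max (discounted_loss r X Y ^~ w) N]).
  apply/nondecreasing_seqP => N; apply/subsetPset => w /= ruin.
  exact: lt_le_trans ruin (running_max_le_succ _ N).
have cvgE := nondecreasing_cvg_mu (mu := P) mE (bigcupT_measurable _ mE) ndE.
rewrite -(cvg_lim _ cvgE) //; apply: lime_le; first exact: cvgP cvgE.
by apply: nearW => N; exact: ruin_before_le.
Qed.
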